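(* Let $B\subset\mathbb R^2$ be a closed Euclidean ball of positive radius, and let $T\subset\mathbb R^2$ be a closed non-degenerate (filled) triangle. Then $S(B)=S(T)=\{(0,0)\}$. Consequently, neither $B$ nor $T$ is the achievement set $E(v_n)$ of any sequence $(v_n)$ in $\mathbb R^2$ with $\sum_n v_n$ absolutely convergent.
   Context: For an absolutely convergent series $\sum_n v_n$ in $\mathbb R^2$, its achievement set is $E(v_n)=\{\sum_{n=1}^\infty \varepsilon_n v_n : (\varepsilon_n)\in\{0,1\}^{\mathbb N}\}$. For $A\subset\mathbb R^2$, the spectre of $A$ is $S(A)=\{x\in \mathbb R^2:\ \forall y\in A,\ y+x\in A\text{ or }y-x\in A\}$. *)

From Stdlib Require Import Reals.
Open Scope R_scope.

Definition pt := (R * R)%type.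

Definition padd (x y : pt) : pt := (fst x + fst y, snd x + snd y).
Definition psub (x y : pt) : pt := (fst x - fst y, snd x - snd y).
Definition pscal (a : R) (x : pt) : pt := (a * fst x, a * snd x).
Definition pzero : pt := (0, 0).

Definition enorm (x : pt) : R := sqrt (fst x ^ 2 + snd x ^ 2).

Definition closed_ball (c : pt) (r : R) : pt -> Prop :=
  fun x => enorm (psub x c) <= r.

Definition nondegenerate (a b c : pt) : Prop :=
  (fst b - fst a) * (snd c - snd a) - (snd b - snd a) * (fst c - fst a) <> 0.

Definition filled_triangle (a b c : pt) : pt -> Prop :=
  fun x => exists al be ga : R,
    0 <= al /\ 0 <= be /\ 0 <= ga /\ al + be + ga = 1 /\
    x = padd (padd (pscal al a) (pscal be b)) (pscal ga c).

Definition spectre (A : pt -> Prop) : pt -> Prop :=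
  fun x => forall y, A y -> A (padd y x) \/ A (psub y x).

Definition abs_convergent (v : nat -> pt) : Prop :=
  exists l : R, Un_cv (fun N => sum_f_R0 (fun n => enorm (v n)) N) l.

Definition subsum_to (v : nat -> pt) (eps : nat -> bool) (p : pt) : Prop :=
  Un_cv (fun N => sum_f_R0 (fun n => if eps n then fst (v n) else 0) N) (fst p) /\
  Un_cv (fun N => sum_f_R0 (fun n => if eps n then snd (v n) else 0) N) (snd p).

Definition achievement_set (v : nat -> pt) : pt -> Prop :=
  fun p => exists eps : nat -> bool, subsum_to v eps p.

Definition set_eq (A B : pt -> Prop) : Prop := forall x, A x <-> B x.

(** A set with trivial spectre and two distinct points is not an achievement
    set: the spectre of [E(v_n)] contains every term [v_n] (flipping the single
    bit [eps_n] of a subsum moves it by [v_n]), so all terms would vanish and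
    [E(v_n)] would be [{0}].

    For a ball, a nonzero [x] is defeated by the boundary point [y] at which
    [x] is tangent: [y + x] and [y - x] both lie strictly outside.  For a
    triangle, use the barycentric coordinates: at each vertex two of them
    vanish, so the corresponding components of the linear parts at [x] share
    the sign of the chosen translation [+x] or [-x].  Two of the three
    vertices choose the same sign, so all three linear parts, which sum to
    zero, have a common weak sign and therefore vanish, i.e. [x = 0]. *)

From Stdlib Require Import Reals Lra Lia.
Open Scope R_scope.

Lemma padd_pzero (y : pt) : padd y pzero = y.
Proof. destruct y; unfold padd, pzero; simpl; f_equal; ring. Qed.

Lemma pzero_or_norm2_pos (x : pt) : x = pzero \/ 0 < fst x ^ 2 + snd x ^ 2.
Proof.
  destruct x as [x1 x2]; simpl.
  destruct (Req_dec x1 0) as [->|H1]; destruct (Req_dec x2 0) as [->|H2];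
    [left; reflexivity | right; nra | right; nra | right; nra].
Qed.

Lemma spectre_pzero (A : pt -> Prop) : spectre A pzero.
Proof. intros y Hy; left; rewrite padd_pzero; exact Hy. Qed.

Lemma spectre_eq_pzero (A : pt -> Prop) :
  (forall x, spectre A x -> x = pzero) -> set_eq (spectre A) (fun x => x = pzero).
Proof. intros HA x; split; [apply HA | intros ->; apply spectre_pzero]. Qed.

Lemma closed_ball_iff (c : pt) (r : R) (x : pt) : 0 <= r ->
  closed_ball c r x <-> (fst x - fst c) ^ 2 + (snd x - snd c) ^ 2 <= r ^ 2.
Proof.
  intros Hr; unfold closed_ball, enorm, psub; simpl.
  set (s := (fst x - fst c) ^ 2 + (snd x - snd c) ^ 2).
  assert (Hs : 0 <= s) by (apply Rplus_le_le_0_compat; apply pow2_ge_0).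
  rewrite <- (sqrt_pow2 r Hr) at 1; split.
  - apply sqrt_le_0; [exact Hs | nra].
  - apply sqrt_le_1_alt.
Qed.

Lemma spectre_closed_ball (c : pt) (r : R) : 0 < r ->
  set_eq (spectre (closed_ball c r)) (fun x => x = pzero).
Proof.
  intros Hr; apply spectre_eq_pzero; intros x Hx.
  destruct (pzero_or_norm2_pos x) as [-> | Hs]; [reflexivity | exfalso].
  set (s := fst x ^ 2 + snd x ^ 2) in Hs.
  assert (Hq : 0 < sqrt s) by (apply sqrt_lt_R0; exact Hs).
  set (t := r / sqrt s).
  assert (Ht : t * t * s = r * r).
  { unfold t; rewrite <- (sqrt_sqrt s) at 3 by lra; field; lra. }
  set (y := (fst c - t * snd x, snd c + t * fst x)).
  assert (Hy : closed_ball c r y).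
  { apply closed_ball_iff; [lra|]; unfold y; simpl; unfold s in Ht; nra. }
  destruct (Hx y Hy) as [H | H]; apply closed_ball_iff in H; try lra;
    revert H; unfold y, padd, psub; simpl; unfold s in Hs, Ht; nra.
Qed.

Lemma spectre_vertex_sign (A : pt -> Prop) (f g lf lg : pt -> R) (v x : pt) :
  spectre A x -> A v ->
  (forall z, A z -> 0 <= f z /\ 0 <= g z) ->
  (forall s, f (padd v s) = lf s /\ f (psub v s) = - lf s) ->
  (forall s, g (padd v s) = lg s /\ g (psub v s) = - lg s) ->
  (0 <= lf x /\ 0 <= lg x) \/ (lf x <= 0 /\ lg x <= 0).
Proof.
  intros Hx Hv Hfg Hf Hg.
  destruct (Hf x) as [Hf_add Hf_sub]; destruct (Hg x) as [Hg_add Hg_sub].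
  destruct (Hx v Hv) as [H | H]; apply Hfg in H;
    [rewrite Hf_add, Hg_add in H | rewrite Hf_sub, Hg_sub in H]; lra.
Qed.

Definition det (p q : pt) : R := fst p * snd q - snd p * fst q.

Section Barycentric.

Variables a b c : pt.

Let D : R := det (psub b a) (psub c a).

(* Barycentric coordinates scaled by [D ^ 2], hence nonnegative on the triangle
   whatever its orientation; [lb], [lc], [la] are their linear parts. *)
Definition lb (x : pt) : R := det x (psub c a) * D.
Definition lc (x : pt) : R := det (psub b a) x * D.
Definition la (x : pt) : R := - (lb x + lc x).

Definition Lb (z : pt) : R := lb (psub z a).
Definition Lc (z : pt) : R := lc (psub z a).
Definition La (z : pt) : R := D ^ 2 + la (psub z a).

Ltac bary_ring :=
  unfold La, Lb, Lc, la, lb, lc, D, det, padd, psub, pscal; cbn [fst snd]; ring.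

Lemma filled_triangle_bary_nonneg (z : pt) :
  filled_triangle a b c z -> 0 <= La z /\ 0 <= Lb z /\ 0 <= Lc z.
Proof.
  intros (al & be & ga & Hal & Hbe & Hga & Hsum & ->).
  replace al with (1 - be - ga) by lra.
  assert (HD : 0 <= D ^ 2) by apply pow2_ge_0.
  replace (La _) with ((1 - be - ga) * D ^ 2) by bary_ring.
  replace (Lb _) with (be * D ^ 2) by bary_ring.
  replace (Lc _) with (ga * D ^ 2) by bary_ring.
  repeat split; apply Rmult_le_pos; lra.
Qed.

Lemma filled_triangle_vertices :
  filled_triangle a b c a /\ filled_triangle a b c b /\ filled_triangle a b c c.
Proof.
  split; [|split]; [exists 1, 0, 0 | exists 0, 1, 0 | exists 0, 0, 1];
    (repeat split; try lra); destruct a, b, c; unfold padd, pscal; cbn [fst snd];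
    f_equal; ring.
Qed.

Lemma bary_linear_eq0 (x : pt) : nondegenerate a b c ->
  lb x = 0 -> lc x = 0 -> x = pzero.
Proof.
  intros Hn Hb Hc.
  assert (HD : D <> 0) by exact Hn.
  apply Rmult_integral in Hb as [Hb | Hb]; [|contradiction].
  apply Rmult_integral in Hc as [Hc | Hc]; [|contradiction].
  (* Cramer's rule for the system [det x (c - a) = 0], [det (b - a) x = 0]. *)
  assert (H1 : D * fst x = 0).
  { replace (D * fst x) with
      (fst (psub b a) * det x (psub c a) + fst (psub c a) * det (psub b a) x)
      by bary_ring.
    rewrite Hb, Hc; ring. }
  assert (H2 : D * snd x = 0).
  { replace (D * snd x) with
      (snd (psub b a) * det x (psub c a) + snd (psub c a) * det (psub b a) x)
      by bary_ring.
    rewrite Hb, Hc; ring. }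
  apply Rmult_integral in H1 as [H1 | H1]; [contradiction|].
  apply Rmult_integral in H2 as [H2 | H2]; [contradiction|].
  destruct x; cbn [fst snd] in *; subst; reflexivity.
Qed.

Lemma spectre_filled_triangle : nondegenerate a b c ->
  set_eq (spectre (filled_triangle a b c)) (fun x => x = pzero).
Proof.
  intros Hn; apply spectre_eq_pzero; intros x Hx.
  destruct filled_triangle_vertices as (Ha & Hb & Hc).
  assert (HLa : forall z, filled_triangle a b c z -> 0 <= La z /\ 0 <= Lb z)
    by (intros z Hz; apply filled_triangle_bary_nonneg in Hz; tauto).
  assert (HLb : forall z, filled_triangle a b c z -> 0 <= La z /\ 0 <= Lc z)
    by (intros z Hz; apply filled_triangle_bary_nonneg in Hz; tauto).
  assert (HLc : forall z, filled_triangle a b c z -> 0 <= Lb z /\ 0 <= Lc z)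
    by (intros z Hz; apply filled_triangle_bary_nonneg in Hz; tauto).
  assert (Sa : (0 <= lb x /\ 0 <= lc x) \/ (lb x <= 0 /\ lc x <= 0)).
  { apply (spectre_vertex_sign _ Lb Lc lb lc a x Hx Ha HLc);
      intros s; split; bary_ring. }
  assert (Sb : (0 <= la x /\ 0 <= lc x) \/ (la x <= 0 /\ lc x <= 0)).
  { apply (spectre_vertex_sign _ La Lc la lc b x Hx Hb HLb);
      intros s; split; bary_ring. }
  assert (Sc : (0 <= la x /\ 0 <= lb x) \/ (la x <= 0 /\ lb x <= 0)).
  { apply (spectre_vertex_sign _ La Lb la lb c x Hx Hc HLa);
      intros s; split; bary_ring. }
  unfold la in Sb, Sc.
  apply (bary_linear_eq0 x Hn); lra.
Qed.

End Barycentric.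

Definition flip_at (eps : nat -> bool) (n : nat) : nat -> bool :=
  fun k => if Nat.eqb k n then negb (eps n) else eps k.

Definition subsum_coord (f : nat -> R) (eps : nat -> bool) (N : nat) : R :=
  sum_f_R0 (fun k => if eps k then f k else 0) N.

Lemma subsum_coord_flip_at_lt (f : nat -> R) (eps : nat -> bool) (n N : nat) :
  (N < n)%nat -> subsum_coord f (flip_at eps n) N = subsum_coord f eps N.
Proof.
  intros HN; apply sum_eq; intros i Hi; unfold flip_at.
  rewrite (proj2 (Nat.eqb_neq i n)) by lia; reflexivity.
Qed.

Lemma subsum_coord_flip_at_ge (f : nat -> R) (eps : nat -> bool) (n N : nat) :
  (n <= N)%nat ->
  subsum_coord f (flip_at eps n) N
  = subsum_coord f eps N + (if eps n then - f n else f n).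
Proof.
  induction N as [|N IH]; intros HN.
  - replace n with 0%nat by lia; unfold subsum_coord, flip_at; simpl.
    destruct (eps 0%nat); simpl; ring.
  - assert (Hstep : forall e, subsum_coord f e (S N)
                      = subsum_coord f e N + (if e (S N) then f (S N) else 0))
      by reflexivity.
    rewrite !Hstep; destruct (Nat.eq_dec n (S N)) as [-> | Hne].
    + rewrite subsum_coord_flip_at_lt by lia.
      unfold flip_at; rewrite Nat.eqb_refl; destruct (eps (S N)); simpl; ring.
    + rewrite IH by lia; unfold flip_at at 1.
      rewrite (proj2 (Nat.eqb_neq (S N) n)) by lia; ring.
Qed.

Lemma Un_cv_eventually_plus (u w : nat -> R) (l d : R) (n : nat) :
  Un_cv u l -> (forall N, (n <= N)%nat -> w N = u N + d) -> Un_cv w (l + d).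
Proof.
  intros Hu Hw e He; destruct (Hu e He) as [N0 HN0]; exists (max N0 n).
  intros N HN; rewrite Hw by lia; unfold R_dist in *.
  replace (u N + d - (l + d)) with (u N - l) by ring; apply HN0; lia.
Qed.

Lemma subsum_coord_flip_at_cv (f : nat -> R) (eps : nat -> bool) (n : nat) (l : R) :
  Un_cv (subsum_coord f eps) l ->
  Un_cv (subsum_coord f (flip_at eps n)) (l + (if eps n then - f n else f n)).
Proof.
  intros H; apply (Un_cv_eventually_plus _ _ _ _ n H).
  intros N; apply subsum_coord_flip_at_ge.
Qed.

Lemma achievement_set_spectre_term (v : nat -> pt) (n : nat) :
  spectre (achievement_set v) (v n).
Proof.
  intros y [eps [H1 H2]].
  apply (subsum_coord_flip_at_cv (fun k => fst (v k)) eps n) in H1.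
  apply (subsum_coord_flip_at_cv (fun k => snd (v k)) eps n) in H2.
  destruct (eps n); [right | left]; exists (flip_at eps n); split; assumption.
Qed.

Lemma achievement_set_of_zero (v : nat -> pt) (p : pt) :
  (forall n, v n = pzero) -> achievement_set v p -> p = pzero.
Proof.
  intros Hv [eps [H1 H2]].
  assert (Hzero : forall f : nat -> R, (forall k, f k = 0) ->
            forall l, Un_cv (subsum_coord f eps) l -> l = 0).
  { intros f Hf l Hl; apply (UL_sequence _ _ _ Hl).
    intros e He; exists 0%nat; intros N _; unfold R_dist, subsum_coord.
    rewrite sum_eq_R0 by (intros k _; rewrite Hf; now destruct (eps k)).
    rewrite Rminus_0_r, Rabs_R0; exact He. }
  apply Hzero in H1; [| intros k; now rewrite Hv].
  apply Hzero in H2; [| intros k; now rewrite Hv].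
  destruct p; cbn [fst snd] in *; subst; reflexivity.
Qed.

Lemma not_achievement_set_of_spectre (A : pt -> Prop) (v : nat -> pt) (p q : pt) :
  set_eq (spectre A) (fun x => x = pzero) -> A p -> A q -> p <> q ->
  ~ set_eq (achievement_set v) A.
Proof.
  intros HS Hp Hq Hpq HE.
  assert (Hv : forall n, v n = pzero).
  { intros n; apply HS; intros y Hy; apply HE in Hy.
    destruct (achievement_set_spectre_term v n y Hy) as [H | H];
      [left | right]; apply HE; exact H. }
  apply HE in Hp; apply HE in Hq; apply Hpq.
  now rewrite (achievement_set_of_zero v p Hv Hp), (achievement_set_of_zero v q Hv Hq).
Qed.

Lemma closed_ball_center_boundary (c : pt) (r : R) : 0 < r ->
  closed_ball c r c /\ closed_ball c r (fst c + r, snd c).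
Proof.
  intros Hr; split; apply closed_ball_iff; simpl; nra.
Qed.

Theorem mainTheorem18 :
  (forall (c : pt) (r : R), 0 < r ->
     set_eq (spectre (closed_ball c r)) (fun x => x = pzero)) /\
  (forall a b c : pt, nondegenerate a b c ->
     set_eq (spectre (filled_triangle a b c)) (fun x => x = pzero)) /\
  (forall (c : pt) (r : R), 0 < r ->
     forall v : nat -> pt, abs_convergent v ->
       ~ set_eq (achievement_set v) (closed_ball c r)) /\
  (forall a b c : pt, nondegenerate a b c ->
     forall v : nat -> pt, abs_convergent v ->
       ~ set_eq (achievement_set v) (filled_triangle a b c)).
Proof.
  split; [exact spectre_closed_ball|].
  split; [exact spectre_filled_triangle|].
  split.
  - intros c r Hr v _.
    destruct (closed_ball_center_boundary c r Hr) as [Hc Hb].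
    apply (not_achievement_set_of_spectre _ v _ _ (spectre_closed_ball c r Hr) Hc Hb).
    destruct c; injection 1; lra.
  - intros a b c Hn v _.
    destruct (filled_triangle_vertices a b c) as (Ha & Hb & _).
    apply (not_achievement_set_of_spectre _ v _ _ (spectre_filled_triangle a b c Hn) Ha Hb).
    intros ->; apply Hn; ring.
Qed.
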